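(* $\mathrm{1QFA}_{(1/2,1/2)}/Rn=\mathrm{ALL}$.
   Context: $\mathrm{ALL}$ is the collection of all languages. A 1qfa is a one-way measure-many quantum finite automaton (one unitary per scanned symbol, followed at each step by a projection measurement onto accepting/rejecting/non-halting subspaces). For equal-length strings $x,y$, $\genfrac{[}{]}{0pt}{}{x}{y}$ is the two-track string with $x$ on the upper track and $y$ on the lower track. For functions $a,b:\mathbb{N}\to[0,1]$, $\mathrm{1QFA}_{(a(n),b(n))}/Rn$ is the family of languages $L$ over $\Sigma$ for which there exist a 1qfa $M$, an advice alphabet $\Gamma$ and randomized advice $\{D_n\}_{n\in\mathbb{N}}$ ($D_n$ a probability distribution on $\Gamma^n$) such that for every $n$ and $x\in\Sigma^n$: if $x\in L$, then $M$ on $\genfrac{[}{]}{0pt}{}{x}{y}$ with $y\sim D_n$ accepts with probability more than $a(n)$; if $x\notin L$, it rejects with probability more than $b(n)$ (probabilities taken over both $M$ and $D_n$). *)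

From HB Require Import structures.
From mathcomp Require Import all_boot all_order all_algebra.
From mathcomp Require Import reals.
From mathcomp Require Import complex.
Set Implicit Arguments. Unset Strict Implicit. Unset Printing Implicit Defensive.
Import Order.TTheory GRing.Theory Num.Theory.
Local Open Scope ring_scope.

Inductive tape_sym (A : Type) := Cent | Dollar | Sym of A.
Arguments Cent {A}. Arguments Dollar {A}.

Definition adjmx (R : realType) m n (A : 'M[R[i]]_(m, n)) : 'M[R[i]]_(n, m) :=
  (map_mx (@conjc R) A)^T.

Definition csqnorm (R : realType) (z : R[i]) : R :=
  (complex.Re z) ^+ 2 + (complex.Im z) ^+ 2.

(* A one-way measure-many quantum finite automaton (Kondacs--Watrous) over
   input alphabet A, with complex amplitudes: state set 'I_qdim, initial state
   qinit, accepting / rejecting states qacc / qrej (disjoint), the remaining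
   states being non-halting; one unitary per tape symbol (including the
   endmarkers). *)
Record mm1qfa (R : realType) (A : Type) := MM1QFA {
  qdim : nat;
  qU : tape_sym A -> 'M[R[i]]_qdim;
  qinit : 'I_qdim;
  qacc : pred 'I_qdim;
  qrej : pred 'I_qdim;
  qU_unitary : forall s, qU s *m adjmx (qU s) = 1%:M;
  qacc_rej_disj : forall q, ~~ (qacc q && qrej q)
}.
Arguments qdim {R A} m.
Arguments qU {R A} m s.
Arguments qinit {R A} m.
Arguments qacc {R A} m _.
Arguments qrej {R A} m _.

Section Run.
Variables (R : realType) (A : Type) (M : mm1qfa R A).

Definition qnon (q : 'I_(qdim M)) : bool := ~~ qacc M q && ~~ qrej M q.

(* configuration: (unnormalised non-halting state vector,
                   accumulated acceptance prob., accumulated rejection prob.) *)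
Definition qconf := ('cV[R[i]]_(qdim M) * R * R)%type.

(* one step: apply the unitary of the scanned symbol, then measure w.r.t.
   the decomposition into accepting / rejecting / non-halting subspaces. *)
Definition qstep (c : qconf) (s : tape_sym A) : qconf :=
  let: (psi, pa, pr) := c in
  let phi := qU M s *m psi in
  (\col_q (if qnon q then phi q 0 else 0),
   pa + \sum_(q | qacc M q) csqnorm (phi q 0),
   pr + \sum_(q | qrej M q) csqnorm (phi q 0)).

Definition qinit_vec : 'cV[R[i]]_(qdim M) :=
  \col_q (if q == qinit M then 1 else 0).

Definition qrun (w : seq A) : qconf :=
  foldl qstep (qinit_vec, 0, 0) (Cent :: rcons (map (@Sym A) w) Dollar).

Definition acc_prob (w : seq A) : R := (qrun w).1.2.
Definition rej_prob (w : seq A) : R := (qrun w).2.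
End Run.

Definition two_track (S G : Type) n (x : n.-tuple S) (y : n.-tuple G)
  : seq (S * G) := zip x y.

Definition is_distr (R : realType) (T : finType) (D : {ffun T -> R}) : Prop :=
  (forall t, 0 <= D t) /\ \sum_t D t = 1.

(* L is in 1QFA_(a(n),b(n))/Rn.  Languages over Sigma are predicates on words;
   a 1qfa over the two-track alphabet Sigma * Gamma is used. *)
Definition in_1QFA_Rn (R : realType) (Sigma : finType) (a b : nat -> R)
    (L : seq Sigma -> Prop) : Prop :=
  exists (Gamma : finType) (M : mm1qfa R (Sigma * Gamma))
         (D : forall n, {ffun n.-tuple Gamma -> R}),
    (forall n, is_distr (D n)) /\
    forall n (x : n.-tuple Sigma),
      (L x -> a n < \sum_(y : n.-tuple Gamma) D n y * acc_prob M (two_track x y)) /\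
      (~ L x -> b n < \sum_(y : n.-tuple Gamma) D n y * rej_prob M (two_track x y)).

From Pilot Require Import Defs.
From mathcomp Require Import all_boot all_order all_algebra.
From mathcomp Require Import reals.
From mathcomp Require Import complex.
From mathcomp Require Import fingroup perm.
From mathcomp Require Import boolp ring.
Import Order.TTheory GRing.Theory Num.Theory.
Set Implicit Arguments. Unset Strict Implicit. Unset Printing Implicit Defensive.
Local Open Scope ring_scope.

(* The advice is a uniformly random guess [z] of the input, drawn from
   [(option Sigma)^n] so that guesses exist even for an empty alphabet, a fair
   fallback bit [c], and, on the last cell, the bit [z \in L].  An automaton
   whose unitaries are permutation matrices runs deterministically: it compares
   the input with the guess and halts with verdict [c] at the first mismatch,
   and with [z \in L] if there is none.  Among the [2N] equally likely advice
   strings the [N - 1] wrong guesses are right half of the time and the correct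
   guess always, so the answer is correct with probability [(N + 1) / 2N]. *)

Lemma perm_mx_unitary (R : realType) n (s : 'S_n) :
  perm_mx s *m adjmx (perm_mx s : 'M[R[i]]_n) = 1%:M.
Proof. by rewrite /adjmx map_perm_mx tr_perm_mx -perm_mxM mulgV perm_mx1. Qed.

Section HaltingQFA.
Variables (R : realType) (A : Type) (decision : tape_sym A -> option bool).

Definition q_live : 'I_3 := ord0.
Definition q_acc : 'I_3 := @Ordinal 3 1 isT.
Definition q_rej : 'I_3 := @Ordinal 3 2 isT.

Definition halt_perm (d : option bool) : 'S_3 :=
  match d with
  | None => 1%g
  | Some true => tperm q_live q_acc
  | Some false => tperm q_live q_rej
  end.

Lemma q_acc_rej_disj (q : 'I_3) : ~~ ((q == q_acc) && (q == q_rej)).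
Proof. by case: eqP => // ->. Qed.

Definition halting_qfa : mm1qfa R A :=
  @MM1QFA R A 3 (fun s => perm_mx (halt_perm (decision s))) q_live
    (pred1 q_acc) (pred1 q_rej) (fun s => perm_mx_unitary R _) q_acc_rej_disj.

Let M := halting_qfa.
Local Arguments qstep : simpl never.

Definition running : qconf M := (qinit_vec M, 0, 0).
Definition halted (b : bool) : qconf M := (0, b%:R, (~~ b)%:R).
Definition conf_of (d : option bool) : qconf M := oapp halted running d.

Lemma csqnorm_nat (b : bool) : csqnorm (b%:R : R[i]) = b%:R.
Proof. by case: b; rewrite /csqnorm /= ?expr0n ?expr1n ?addr0. Qed.

Lemma qstep_halted b s : qstep (halted b) s = halted b.
Proof.
rewrite /qstep /halted mulmx0; congr (_, _, _).
- by apply/matrixP => q j; rewrite !mxE; case: qnon.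
- by rewrite big1 ?addr0 // => q _; rewrite mxE (csqnorm_nat false).
- by rewrite big1 ?addr0 // => q _; rewrite mxE (csqnorm_nat false).
Qed.

Definition verdict_state (d : option bool) : 'I_3 :=
  match d with None => q_live | Some true => q_acc | Some false => q_rej end.

Lemma halt_perm_mx_init d :
  perm_mx (halt_perm d) *m qinit_vec M = \col_q (q == verdict_state d)%:R.
Proof.
apply/matrixP => q j; rewrite !mxE (bigD1 (halt_perm d q)) //= !mxE eqxx mul1r.
rewrite big1 => [|k /negbTE nk]; last by rewrite !mxE eq_sym nk mul0r.
rewrite addr0; case: d => [[]|] /=; last by rewrite perm1; case: eqP.
- by rewrite -[X in _ == X](tpermR q_live q_acc) (inj_eq perm_inj); case: eqP.
- by rewrite -[X in _ == X](tpermR q_live q_rej) (inj_eq perm_inj); case: eqP.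
Qed.

Lemma qstep_running s : qstep running s = conf_of (decision s).
Proof.
rewrite /qstep /= halt_perm_mx_init (big_pred1 q_acc) // (big_pred1 q_rej) //.
rewrite !mxE !csqnorm_nat !add0r.
case: (decision s) => [[]|] /=; congr (_, _, _); apply/matrixP => q j; rewrite !mxE /qnon /=.
- by case: ifP => // /andP[/negbTE ->].
- by case: ifP => // /andP[_ /negbTE ->].
- by case: (q =P q_live) => [->|_] //; case: ifP.
Qed.

Lemma foldl_qstep_halted b ss : foldl (@qstep R A M) (halted b) ss = halted b.
Proof. by elim: ss => //= s ss; rewrite qstep_halted. Qed.

Lemma foldl_qstep_running ss :
  foldl (@qstep R A M) running ss = conf_of (ohead (pmap decision ss)).
Proof.
elim: ss => //= s ss IH; rewrite qstep_running.
by case: (decision s) => //= b; rewrite foldl_qstep_halted.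
Qed.

Definition first_decision (w : seq A) : option bool :=
  ohead (pmap decision (Cent :: rcons (map (@Defs.Sym A) w) Dollar)).

Lemma acc_prob_halting w : acc_prob M w = (first_decision w == Some true)%:R.
Proof.
by rewrite /acc_prob /qrun foldl_qstep_running -/(first_decision w); case: first_decision => [[]|].
Qed.

Lemma rej_prob_halting w : rej_prob M w = (first_decision w == Some false)%:R.
Proof.
by rewrite /rej_prob /qrun foldl_qstep_running -/(first_decision w); case: first_decision => [[]|].
Qed.

End HaltingQFA.

Section UniformPushforward.
Variables (R : realType) (T U : finType) (f : T -> U).

Definition uniform_pushforward : {ffun U -> R} :=
  [ffun u => \sum_(t | f t == u) #|T|%:R^-1].

Lemma uniform_pushforward_expectation (g : U -> R) :
  \sum_u uniform_pushforward u * g u = #|T|%:R^-1 * \sum_t g (f t).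
Proof.
rewrite mulr_sumr (partition_big f predT) //=; apply: eq_bigr => u _.
by rewrite ffunE mulr_suml; apply: eq_bigr => t /eqP <-.
Qed.

Lemma uniform_pushforward_distr : (0 < #|T|)%N -> is_distr uniform_pushforward.
Proof.
move=> T_gt0; split => [u|].
  by rewrite ffunE; apply: sumr_ge0 => t _; rewrite invr_ge0.
have := uniform_pushforward_expectation (fun _ => 1).
under eq_bigr do rewrite mulr1.
by move=> ->; rewrite sumr_const mulVf // pnatr_eq0 -lt0n.
Qed.

End UniformPushforward.

Lemma fallback_average_gt_half (R : realType) (X : finType) (x0 : X)
    (h : X * bool -> R) :
  (forall x, x != x0 -> h (x, true) + h (x, false) = 1) ->
  h (x0, true) + h (x0, false) = 2 ->
  2^-1 < #|{: X * bool}|%:R^-1 * \sum_t h t.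
Proof.
move=> h_wrong h_right.
have h_pair x : h (x, true) + h (x, false) = 1 + (x == x0)%:R.
  by have [->|/h_wrong ->] := eqVneq x x0; rewrite ?h_right ?addr0.
have -> : \sum_t h t = #|X|%:R + 1.
  transitivity (\sum_x \sum_c h (x, c)); first by rewrite pair_bigA; apply: eq_bigr => -[].
  under eq_bigr => x _ do rewrite big_bool /= h_pair.
  rewrite big_split /= sumr_const (bigD1 x0) //= eqxx big1 ?addr0 //.
  by move=> x /negbTE ->.
have N_gt0 : 0 < #|X|%:R :> R by rewrite ltr0n; apply/card_gt0P; exists x0.
rewrite card_prod card_bool natrM.
have -> : (#|X|%:R * 2)^-1 * (#|X|%:R + 1) = 2^-1 + (#|X|%:R * 2)^-1 :> R.
  by field; rewrite gt_eqF.
by rewrite ltrDl invr_gt0 mulr_gt0.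
Qed.

Section GuessingAdvice.
Variables (R : realType) (Sigma : finType) (L : seq Sigma -> Prop).

Definition in_lang (z : seq (option Sigma)) : bool :=
  `[< exists2 x, z = map Some x & L x >].

Lemma in_langP x : reflect (L x) (in_lang (map Some x)).
Proof.
apply: (iffP (asboolP _)) => [[x' /(inj_map (@Some_inj _)) -> //]|Lx].
by exists x.
Qed.

(* An advice symbol carries the guessed input symbol, the fallback bit, and, on
   the last position only, whether the guessed word lies in [L]. *)
Definition advice := (option Sigma * bool * option bool)%type.

Fixpoint advice_word (b c : bool) (z : seq (option Sigma)) : seq advice :=
  match z with
  | [::] => [::]
  | y :: z' => (y, c, if z' is [::] then Some b else None) :: advice_word b c z'
  end.

Lemma size_advice_word b c z : size (advice_word b c z) = size z.
Proof. by elim: z => //= y z ->. Qed.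

Definition advice_tuple n (zc : n.-tuple (option Sigma) * bool) : n.-tuple advice :=
  let: (z, c) := zc in
  Tuple (introT eqP (etrans (size_advice_word (in_lang z) c z) (size_tuple z))).

Definition check_guess (s : tape_sym (Sigma * advice)) : option bool :=
  match s with
  | Cent => None
  | Dollar => Some (in_lang [::])
  | Defs.Sym (a, (y, c, l)) => if Some a == y then l else Some c
  end.

Lemma check_guess_advice_word b c x z : size x = size z -> z != [::] ->
  ohead (pmap check_guess (map (@Defs.Sym _) (zip x (advice_word b c z)))) =
  Some (if map Some x == z then b else c).
Proof.
elim: x z => [|a x IH] [|y z] //= [size_xz] _; rewrite eqseq_cons.
case: (Some a =P y) => //= _.
by case: z size_xz {IH} (IH z) => [|y' z] /=; [case: x | move=> ? ->].
Qed.

Definition guess_verdict n (x : n.-tuple Sigma) (zc : n.-tuple (option Sigma) * bool) :=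
  if map_tuple Some x == zc.1 then in_lang zc.1 else zc.2.

Lemma first_decision_advice n (x : n.-tuple Sigma) zc :
  first_decision check_guess (two_track x (advice_tuple zc)) =
  Some (guess_verdict x zc).
Proof.
case: zc => z c; rewrite /first_decision /two_track /guess_verdict -val_eqE /=.
have [z_nil|z_cons] := eqVneq (val z) [::].
  have x_nil : val x = [::] by apply/nilP; rewrite /nilp size_tuple -(size_tuple z) z_nil.
  by rewrite z_nil x_nil.
have := check_guess_advice_word (in_lang z) c (etrans (size_tuple x) (esym (size_tuple z))) z_cons.
by rewrite -cats1 pmap_cat; case: pmap.
Qed.

Lemma acc_prob_advice n (x : n.-tuple Sigma) zc :
  acc_prob (halting_qfa R check_guess) (two_track x (advice_tuple zc)) =
  (guess_verdict x zc)%:R.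
Proof. by rewrite acc_prob_halting first_decision_advice; case: guess_verdict. Qed.

Lemma rej_prob_advice n (x : n.-tuple Sigma) zc :
  rej_prob (halting_qfa R check_guess) (two_track x (advice_tuple zc)) =
  (~~ guess_verdict x zc)%:R.
Proof. by rewrite rej_prob_halting first_decision_advice; case: guess_verdict. Qed.

Lemma guess_verdict_wrong n (x : n.-tuple Sigma) z c :
  z != map_tuple Some x -> guess_verdict x (z, c) = c.
Proof. by rewrite /guess_verdict eq_sym => /negbTE ->. Qed.

Lemma guess_verdict_right n (x : n.-tuple Sigma) c :
  guess_verdict x (map_tuple Some x, c) = `[< L x >].
Proof. by rewrite /guess_verdict eqxx; apply/idP/asboolP => /in_langP. Qed.

End GuessingAdvice.

Theorem lemma5p1 (R : realType) (Sigma : finType) (L : seq Sigma -> Prop) :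
  in_1QFA_Rn (fun _ => 2^-1 : R) (fun _ => 2^-1 : R) L.
Proof.
exists (advice Sigma), (halting_qfa R (check_guess L)),
  (fun n => uniform_pushforward R (@advice_tuple Sigma L n)).
split=> [n|n x].
  by apply: uniform_pushforward_distr; apply/card_gt0P; exists (nseq_tuple n None, true).
rewrite !uniform_pushforward_expectation.
split=> Lx; [under eq_bigr do rewrite acc_prob_advice | under eq_bigr do rewrite rej_prob_advice];
  apply: (fallback_average_gt_half (x0 := map_tuple Some x)) => [z /guess_verdict_wrong wrong|];
  by rewrite ?wrong ?guess_verdict_right ?(asboolT Lx) ?(asboolF Lx) ?addr0 ?add0r.
Qed.
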